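(* Consider the semi-discretization of the 3-D compressible Euler equations on a conforming hexahedral mesh described in the context. Assume the diagonal metric matrices satisfy, for every element $\kappa$ and every time $\tau$, $$\frac{\mathrm{d}}{\mathrm{d}\tau}\bigl(\mathsf{J}_\kappa\mathbf{1}\bigr)+\sum_{l=1}^{3}\mathsf{D}_{\xi_l}\mathsf{B}_{l,\kappa}\mathbf{1}=\mathbf{0},\qquad \sum_{l=1}^{3}\mathsf{D}_{\xi_l}\mathsf{A}_{lm,\kappa}\mathbf{1}=\mathbf{0},\quad m=1,2,3 .$$ Then the scheme is freestream preserving. That is, let $u_c\in\mathbb{R}^5$ be an admissible constant state ($\rho>0$, $T>0$). If at some time every row of $q_\kappa$ and every row of the neighbouring states $q_{\kappa_{2l-1}},q_{\kappa_{2l}}$ ($l=1,2,3$) entering the interface terms equals $u_c^T$, then $\frac{\mathrm d q_\kappa}{\mathrm d\tau}=0$ at that time.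
   Context: **Gas model.** Ideal gas with gas constant $R>0$ and $\gamma>1$. Set $c_p=\gamma R/(\gamma-1)$ and $c_v=R/(\gamma-1)$. Conservative variables are $u=(\rho,\rho V_1,\rho V_2,\rho V_3,\rho E)^T$, where $E=c_vT+\tfrac12|V|^2$. Pressure is $p=\rho RT$ and specific enthalpy is $h=c_pT$. Inviscid fluxes are $F_m(u)=(\rho V_m,\rho V_mV_1+\delta_{m1}p,\rho V_mV_2+\delta_{m2}p,\rho V_mV_3+\delta_{m3}p,\rho V_m(E+p/\rho))^T$. Thermodynamic entropy is $s=\frac{R}{\gamma-1}\log(T/T_\infty)-R\log(\rho/\rho_\infty)$. Mathematical entropy is $\mathcal S=-\rho s$, with entropy flux $\mathcal F_{x_m}=-\rho sV_m$. Entropy variables are $w(u)=(\partial\mathcal S/\partial u)^T$. Potentials are $\varphi=w^Tu-\mathcal S$ and $\psi_m=w^TF_m-\mathcal F_{x_m}$. **Two-point fluxes.** $U^{sc}(u,v),F^{sc}_m(u,v)\in\mathbb{R}^5$ satisfy: - symmetry in $(u,v)$; - consistency: $U^{sc}(u,u)=u$, $F^{sc}_m(u,u)=F_m(u)$; - shuffle conditions: $(w(u)-w(v))^TU^{sc}(u,v)=\varphi(u)-\varphi(v)$ and $(w(u)-w(v))^TF^{sc}_m(u,v)=\psi_m(u)-\psi_m(v)$. **1-D SBP operators (spectral collocation).** For $l=1,2,3$, take $N_l$ nodes $\alpha_l=\xi_{l,1}<\dots<\xi_{l,N_l}=\beta_l$. Let $H_l$ be diagonal positive definite and $Q_l+Q_l^T=E_l:=e_{N_l}e_{N_l}^T-e_1e_1^T$.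 Set $D_l=H_l^{-1}Q_l$, with $D_l\mathbf 1=\mathbf 0$. **Tensor-product operators.** Each element has $N=N_1N_2N_3$ nodes. Define $\mathsf M=H_1\otimes H_2\otimes H_3$. For $l=1$: - $\mathsf D_{\xi_1}=D_1\otimes I\otimes I$ and $\mathsf E_{\xi_1}=E_1\otimes H_2\otimes H_3$; - $\mathsf R_{\xi_1,\alpha}=e_1^T\otimes I\otimes I$ and $\mathsf R_{\xi_1,\beta}=e_{N_1}^T\otimes I\otimes I$; - $\mathsf P_{\xi_1}=H_2\otimes H_3$. The operators for $l=2,3$ are analogous, with the 1-D factor in position $l$. $\circ$ is the Hadamard product, and $(\mathsf X\circ \mathsf Y)\mathbf 1$ means the Hadamard product is formed first. **Mesh and metrics.** Elements are conforming hexahedra, each the image of a reference cube under a smooth, invertible, time-dependent map. Element $\kappa$ carries: - nodal states $q_\kappa(\tau)\in\mathbb{R}^{N\times 5}$, where row $a$ is the state at node $a$; - diagonal matrices $\mathsf J_\kappa$ (positive entries, approximating $J$), $\mathsf B_{l,\kappa}$ (approximating $J\partial\xi_l/\partial t$) and $\mathsf A_{lm,\kappa}$ (approximating $J\partial\xi_l/\partial x_m$) at the nodes. $\kappa_{2l-1}$ and $\kappa_{2l}$ denote the neighbours (or boundary data states) across the faces $\xi_l=\alpha_l$ and $\xi_l=\beta_l$, respectively. **Flux matrices.** For $i=1,\dots,5$, let $\mathsf U^{sc,i}(q_\kappa,q_r)\in\mathbb{R}^{N\times N}$ have $(a,b)$ entry equal to the $i$-th component of $U^{sc}(q_\kappa(a,:),q_r(b,:))$.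 Define $\mathsf F^{sc,i}_m$ analogously. **Scheme.** For every element $\kappa$ and $i=1,\dots,5$: $$\tfrac{\mathrm d}{\mathrm d\tau}(\mathsf J_\kappa q_\kappa(:,i))+\sum_{l}\bigl[(\mathsf D_{\xi_l}\mathsf B_{l,\kappa}+\mathsf B_{l,\kappa}\mathsf D_{\xi_l})\circ\mathsf U^{sc,i}(q_\kappa,q_\kappa)\bigr]\mathbf 1+\sum_{l,m}\bigl[(\mathsf D_{\xi_l}\mathsf A_{lm,\kappa}+\mathsf A_{lm,\kappa}\mathsf D_{\xi_l})\circ\mathsf F^{sc,i}_m(q_\kappa,q_\kappa)\bigr]\mathbf 1 = \mathsf M^{-1}\sum_l\Bigl[(\mathsf E_{\xi_l}\mathsf B_{l,\kappa})\circ\mathsf U^{sc,i}(q_\kappa,q_\kappa)\mathbf 1+(\mathsf B_{l,\kappa}\mathsf R_{\xi_l,\alpha}^T\mathsf P_{\xi_l}\mathsf R_{\xi_l,\beta})\circ\mathsf U^{sc,i}(q_\kappa,q_{\kappa_{2l-1}})\mathbf 1-(\mathsf B_{l,\kappa}\mathsf R_{\xi_l,\beta}^T\mathsf P_{\xi_l}\mathsf R_{\xi_l,\alpha})\circ\mathsf U^{sc,i}(q_\kappa,q_{\kappa_{2l}})\mathbf 1\Bigr] + \mathsf M^{-1}\sum_{l,m}\Bigl[(\mathsf E_{\xi_l}\mathsf A_{lm,\kappa})\circ\mathsf F^{sc,i}_m(q_\kappa,q_\kappa)\mathbf 1+(\mathsf A_{lm,\kappa}\mathsf R_{\xi_l,\alpha}^T\mathsf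 P_{\xi_l}\mathsf R_{\xi_l,\beta})\circ\mathsf F^{sc,i}_m(q_\kappa,q_{\kappa_{2l-1}})\mathbf 1-(\mathsf A_{lm,\kappa}\mathsf R_{\xi_l,\beta}^T\mathsf P_{\xi_l}\mathsf R_{\xi_l,\alpha})\circ\mathsf F^{sc,i}_m(q_\kappa,q_{\kappa_{2l}})\mathbf 1\Bigr].$$ *)

From HB Require Import structures.
From mathcomp Require Import all_boot all_order all_algebra.
From mathcomp Require Import mxtens.
From mathcomp Require Import all_classical all_reals all_analysis.

Set Implicit Arguments.
Unset Strict Implicit.
Unset Printing Implicit Defensive.

Import Order.TTheory GRing.Theory Num.Theory.
Local Open Scope ring_scope.

(* Gas model, entropy, fluxes.  A state u = (rho, rho V1, rho V2, rho V3,
   rho E) is a row vector 'rV_5 (indices 0..4).                       *)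
Section Gas.
Variables (R : realType) (Rg gam Tinf rhoinf : R).

Definition cp : R := gam * Rg / (gam - 1).
Definition cv : R := Rg / (gam - 1).

Definition rho (u : 'rV[R]_5) : R := u ord0 ord0.
(* velocity component V_{k+1}, k = 0,1,2 *)
Definition vel (u : 'rV[R]_5) (k : nat) : R := u ord0 (inord k.+1) / rho u.
Definition Etot (u : 'rV[R]_5) : R := u ord0 (inord 4) / rho u.
Definition speed2 (u : 'rV[R]_5) : R := \sum_(k < 3) vel u k ^+ 2.
(* E = c_v T + |V|^2/2 *)
Definition Temp (u : 'rV[R]_5) : R := (Etot u - speed2 u / 2) / cv.
Definition pres (u : 'rV[R]_5) : R := rho u * Rg * Temp u.
Definition enth (u : 'rV[R]_5) : R := cp * Temp u.

Definition admissible (u : 'rV[R]_5) : Prop := 0 < rho u /\ 0 < Temp u.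

(* inviscid flux F_m, m = 0,1,2 standing for x_1, x_2, x_3 *)
Definition Flux (m : 'I_3) (u : 'rV[R]_5) : 'rV[R]_5 :=
  \row_(i < 5)
    (if (i : nat) == 0%N then rho u * vel u m
     else if (i : nat) == 4%N then rho u * vel u m * (Etot u + pres u / rho u)
     else rho u * vel u m * vel u i.-1 + (if (m : nat) == i.-1 then pres u else 0)).

Definition sthermo (u : 'rV[R]_5) : R :=
  Rg / (gam - 1) * ln (Temp u / Tinf) - Rg * ln (rho u / rhoinf).
Definition Sent (u : 'rV[R]_5) : R := - (rho u * sthermo u).
Definition Fent (m : 'I_3) (u : 'rV[R]_5) : R := - (rho u * sthermo u * vel u m).

Definition wvar (u : 'rV[R]_5) : 'rV[R]_5 :=
  \row_(i < 5) ('D_(delta_mx ord0 i) Sent u : R).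

Definition dot5 (a b : 'rV[R]_5) : R := \sum_(i < 5) a ord0 i * b ord0 i.

Definition phi_pot (u : 'rV[R]_5) : R := dot5 (wvar u) u - Sent u.
Definition psi_pot (m : 'I_3) (u : 'rV[R]_5) : R :=
  dot5 (wvar u) (Flux m u) - Fent m u.

(* Two-point fluxes: symmetry, consistency, shuffle conditions
   (imposed on admissible states, where the entropy is defined). *)
Definition two_point_fluxes (Usc : 'rV[R]_5 -> 'rV[R]_5 -> 'rV[R]_5)
  (Fsc : 'I_3 -> 'rV[R]_5 -> 'rV[R]_5 -> 'rV[R]_5) : Prop :=
  [/\ (forall u v, admissible u -> admissible v ->
         Usc u v = Usc v u /\ forall m, Fsc m u v = Fsc m v u),
      (forall u, admissible u ->
         Usc u u = u /\ forall m, Fsc m u u = Flux m u) &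
      (forall u v, admissible u -> admissible v ->
         dot5 (wvar u - wvar v) (Usc u v) = phi_pot u - phi_pot v /\
         forall m, dot5 (wvar u - wvar v) (Fsc m u v) = psi_pot m u - psi_pot m v)].

End Gas.

Section SBP.
Variable R : realType.

Definition Ebnd (n : nat) : 'M[R]_n.+1 :=
  delta_mx ord_max ord_max - delta_mx ord0 ord0.

Definition nodes1 (n : nat) (alpha beta : R) (xi : 'rV[R]_n.+1) : Prop :=
  [/\ alpha < beta, xi ord0 ord0 = alpha, xi ord0 ord_max = beta &
      forall i j : 'I_n.+1, (i < j)%N -> xi ord0 i < xi ord0 j].

Definition sbp1 (n : nat) (H Q D : 'M[R]_n.+1) : Prop :=
  [/\ is_diag_mx H, (forall i, 0 < H i i),
      Q + Q^T = Ebnd n,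
      D = invmx H *m Q &
      D *m (const_mx 1 : 'cV[R]_n.+1) = 0].

End SBP.

(* Tensor-product operators on an element with N = N1 N2 N3 nodes,
   N_l = n_l.+1; the node ordering is the Kronecker one of [tensmx].  *)
Section Tensor.
Variables (R : realType) (n1 n2 n3 : nat).
Variables (H1 D1 : 'M[R]_n1.+1) (H2 D2 : 'M[R]_n2.+1) (H3 D3 : 'M[R]_n3.+1).

Local Notation N := ((n1.+1 * n2.+1) * n3.+1)%N.

Definition Mmass : 'M[R]_N := H1 *t H2 *t H3.

Definition Dxi (l : 'I_3) : 'M[R]_N :=
  if (l : nat) == 0%N then D1 *t 1%:M *t 1%:M
  else if (l : nat) == 1%N then 1%:M *t D2 *t 1%:M
  else 1%:M *t 1%:M *t D3.

Definition Exi (l : 'I_3) : 'M[R]_N :=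
  if (l : nat) == 0%N then Ebnd R n1 *t H2 *t H3
  else if (l : nat) == 1%N then H1 *t Ebnd R n2 *t H3
  else H1 *t H2 *t Ebnd R n3.

Definition eA (n : nat) : 'M[R]_(1, n.+1) := delta_mx ord0 ord0.
Definition eB (n : nat) : 'M[R]_(1, n.+1) := delta_mx ord0 ord_max.

Definition R1 (e : forall n, 'M[R]_(1, n.+1)) : 'M[R]_((1 * n2.+1) * n3.+1, N) :=
  e n1 *t 1%:M *t 1%:M.
Definition R2 (e : forall n, 'M[R]_(1, n.+1)) : 'M[R]_((n1.+1 * 1) * n3.+1, N) :=
  1%:M *t e n2 *t 1%:M.
Definition R3 (e : forall n, 'M[R]_(1, n.+1)) : 'M[R]_((n1.+1 * n2.+1) * 1, N) :=
  1%:M *t 1%:M *t e n3.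

Lemma face1_eq : (n2.+1 * n3.+1 = (1 * n2.+1) * n3.+1)%N.
Proof. by rewrite mul1n. Qed.
Lemma face2_eq : (n1.+1 * n3.+1 = (n1.+1 * 1) * n3.+1)%N.
Proof. by rewrite muln1. Qed.
Lemma face3_eq : (n1.+1 * n2.+1 = (n1.+1 * n2.+1) * 1)%N.
Proof. by rewrite muln1. Qed.

Definition P1 : 'M[R]_((1 * n2.+1) * n3.+1) := castmx (face1_eq, face1_eq) (H2 *t H3).
Definition P2 : 'M[R]_((n1.+1 * 1) * n3.+1) := castmx (face2_eq, face2_eq) (H1 *t H3).
Definition P3 : 'M[R]_((n1.+1 * n2.+1) * 1) := castmx (face3_eq, face3_eq) (H1 *t H2).

Definition RaPRb (l : 'I_3) : 'M[R]_N :=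
  if (l : nat) == 0%N then (R1 eA)^T *m P1 *m R1 eB
  else if (l : nat) == 1%N then (R2 eA)^T *m P2 *m R2 eB
  else (R3 eA)^T *m P3 *m R3 eB.

Definition RbPRa (l : 'I_3) : 'M[R]_N :=
  if (l : nat) == 0%N then (R1 eB)^T *m P1 *m R1 eA
  else if (l : nat) == 1%N then (R2 eB)^T *m P2 *m R2 eA
  else (R3 eB)^T *m P3 *m R3 eA.

End Tensor.

Section Helpers.
Variable R : realType.

Definition hmx (m n : nat) (X Y : 'M[R]_(m, n)) : 'M[R]_(m, n) :=
  \matrix_(a, b) (X a b * Y a b).

Definition ones (n : nat) : 'cV[R]_n := const_mx 1.

Definition ddt (m n : nat) (f : R -> 'M[R]_(m, n)) (t : R) : 'M[R]_(m, n) :=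
  \matrix_(a, b) derive1 (fun s => f s a b) t.

Definition tdiff (m n : nat) (f : R -> 'M[R]_(m, n)) : Prop :=
  forall t a b, derivable (fun s => f s a b) t 1.

Definition fluxmx (N : nat) (Fl : 'rV[R]_5 -> 'rV[R]_5 -> 'rV[R]_5)
  (i : 'I_5) (q r : 'M[R]_(N, 5)) : 'M[R]_N :=
  \matrix_(a, b) Fl (row a q) (row b r) ord0 i.

End Helpers.

From HB Require Import structures.
From mathcomp Require Import all_boot all_order all_algebra.
From mathcomp Require Import mxtens.
From mathcomp Require Import all_classical all_reals all_analysis.
Import Order.TTheory GRing.Theory Num.Theory.
Local Open Scope ring_scope.

Set Implicit Arguments.
Unset Strict Implicit.
Unset Printing Implicit Defensive.

(* On a uniform state u_c every flux matrix is constant (consistency of the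
   two-point fluxes), so each Hadamard product with it is a scalar times an
   ordinary product with 1.  The volume terms then reduce to D B 1 and D A 1
   because D 1 = 0.  The surface terms vanish: the metric matrices are
   diagonal, hence commute with E, and (E + R_a^T P R_b - R_b^T P R_a) 1 = 0,
   being the 1-D identity (e_N - e_1) + e_1 - e_N = 0 tensored with the face
   masses; in particular M^-1 only ever acts on 0.  The metric identities
   leave d/dt (J q_i) = u_i d/dt (J 1), and the product rule with J > 0 gives
   dq/dt = 0. *)

Section Kronecker.
Variable R : pzRingType.

Lemma tensmxDl m n p q (A B : 'M[R]_(m, n)) (C : 'M[R]_(p, q)) :
  (A + B) *t C = A *t C + B *t C.
Proof. by apply/matrixP => i j; rewrite !mxE mulrDl. Qed.

Lemma tensmxBl m n p q (A B : 'M[R]_(m, n)) (C : 'M[R]_(p, q)) :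
  (A - B) *t C = A *t C - B *t C.
Proof. by apply/matrixP => i j; rewrite !mxE mulrBl. Qed.

Lemma tensmxDr m n p q (A : 'M[R]_(m, n)) (B C : 'M[R]_(p, q)) :
  A *t (B + C) = A *t B + A *t C.
Proof. by apply/matrixP => i j; rewrite !mxE mulrDr. Qed.

Lemma tensmxBr m n p q (A : 'M[R]_(m, n)) (B C : 'M[R]_(p, q)) :
  A *t (B - C) = A *t B - A *t C.
Proof. by apply/matrixP => i j; rewrite !mxE mulrBr. Qed.

Lemma is_diag_tensmx m n (A : 'M[R]_m) (B : 'M[R]_n) :
  is_diag_mx A -> is_diag_mx B -> is_diag_mx (A *t B).
Proof.
move=> /is_diag_mxP dA /is_diag_mxP dB; apply/is_diag_mxP => i j.
case: (mxtens_indexP i) => i1 i2; case: (mxtens_indexP j) => j1 j2 neq_ij.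
rewrite tensmxE.
have [e1|/dA->] := eqVneq i1 j1; last by rewrite mul0r.
have [e2|/dB->] := eqVneq i2 j2; last by rewrite mulr0.
by move: neq_ij; rewrite e1 e2 eqxx.
Qed.

End Kronecker.

Section FaceMass.
Variables (R : realType) (n1 n2 n3 : nat).
Variables (H1 : 'M[R]_n1.+1) (H2 : 'M[R]_n2.+1) (H3 : 'M[R]_n3.+1).

Lemma P1_tens : P1 H2 H3 = 1%:M *t H2 *t H3.
Proof.
apply/matrixP => i j; rewrite castmxE.
case: (mxtens_indexP i) => i01 i2; case: (mxtens_indexP i01) => i0 i1.
case: (mxtens_indexP j) => j01 j2; case: (mxtens_indexP j01) => j0 j1.
rewrite !tensmxE [i0]ord1 [j0]ord1 [1%:M _ _]mxE eqxx mul1r.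
have castE : forall k1 k2, cast_ord (esym (face1_eq n2 n3))
    (mxtens_index (mxtens_index (ord0, k1), k2)) = mxtens_index (k1, k2).
  by move=> k1 k2; apply: val_inj.
by rewrite !castE tensmxE.
Qed.

Lemma P2_tens : P2 H1 H3 = H1 *t 1%:M *t H3.
Proof.
apply/matrixP => i j; rewrite castmxE.
case: (mxtens_indexP i) => i01 i2; case: (mxtens_indexP i01) => i0 i1.
case: (mxtens_indexP j) => j01 j2; case: (mxtens_indexP j01) => j0 j1.
rewrite !tensmxE [i1]ord1 [j1]ord1 [1%:M _ _]mxE eqxx mulr1.
have castE : forall k0 k2, cast_ord (esym (face2_eq n1 n3))
    (mxtens_index (mxtens_index (k0, ord0), k2)) = mxtens_index (k0, k2).
  by move=> k0 k2; apply: val_inj => /=; rewrite muln1 addn0.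
by rewrite !castE tensmxE.
Qed.

Lemma P3_tens : P3 H1 H2 = H1 *t H2 *t 1%:M.
Proof.
apply/matrixP => i j; rewrite castmxE.
case: (mxtens_indexP i) => i01 i2; case: (mxtens_indexP j) => j01 j2.
rewrite tensmxE [i2]ord1 [j2]ord1 [1%:M _ _]mxE eqxx mulr1.
have castE : forall k, cast_ord (esym (face3_eq n1 n2)) (mxtens_index (k, ord0)) = k.
  by move=> k; apply: val_inj => /=; rewrite muln1 addn0.
by rewrite !castE.
Qed.

End FaceMass.

Section TensorOnes.
Variable R : realType.

Lemma ones_tensmx m n : ones R (m * n) = ones R m *t ones R n.
Proof. by apply/matrixP => i j; rewrite !mxE mulr1. Qed.

Lemma mul_tensmx_ones m n p q (A : 'M[R]_(m, n)) (B : 'M[R]_(p, q)) :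
  (A *t B) *m ones R (n * q) = (A *m ones R n) *t (B *m ones R q).
Proof.
rewrite ones_tensmx; apply/matrixP => i j.
have /matrixP/(_ i (mxtens_index (j, j))) := tensmx_mul A B (ones R n) (ones R q).
by have -> : mxtens_index (j, j) = j :> 'I_1 by rewrite [j]ord1; apply: val_inj.
Qed.

Lemma mul_delta_mx_ones m n (i : 'I_m) (j : 'I_n) :
  delta_mx i j *m ones R n = delta_mx i 0.
Proof.
apply/matrixP => a b; rewrite !mxE (bigD1 j) //= big1 ?addr0.
  by rewrite !mxE eqxx [b]ord1 eqxx !andbT mulr1.
by move=> k /negbTE nkj; rewrite !mxE nkj andbF mul0r.
Qed.

Lemma Ebnd_boundary_ones n :
  (Ebnd R n + (eA R n)^T *m eB R n - (eB R n)^T *m eA R n) *m ones R n.+1 = 0.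
Proof.
rewrite /Ebnd /eA /eB !trmx_delta !mul_delta_mx !mulmxDl !mulNmx.
by rewrite !mul_delta_mx_ones subrK subrr.
Qed.

Variables (n1 n2 n3 : nat).
Variables (H1 D1 : 'M[R]_n1.+1) (H2 D2 : 'M[R]_n2.+1) (H3 D3 : 'M[R]_n3.+1).

Lemma Exi_is_diag l : is_diag_mx H1 -> is_diag_mx H2 -> is_diag_mx H3 ->
  is_diag_mx (Exi H1 H2 H3 l).
Proof.
have Ebnd_diag n : is_diag_mx (Ebnd R n).
  apply/is_diag_mxP => i j nij; rewrite !mxE.
  have off x : (i == x) && (j == x) = false.
    by apply/negP => /andP[/eqP ix /eqP jx]; rewrite ix jx eqxx in nij.
  by rewrite !off subrr.
move=> dH1 dH2 dH3; rewrite /Exi.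
by case: ifP => _; [|case: ifP => _]; rewrite !is_diag_tensmx ?Ebnd_diag.
Qed.

Lemma Dxi_ones l :
  D1 *m ones R _ = 0 -> D2 *m ones R _ = 0 -> D3 *m ones R _ = 0 ->
  Dxi D1 D2 D3 l *m ones R _ = 0.
Proof.
move=> D1_1 D2_1 D3_1; rewrite /Dxi.
by case: ifP => _; [|case: ifP => _];
  rewrite !mul_tensmx_ones ?D1_1 ?D2_1 ?D3_1 ?(tens0mx, tensmx0).
Qed.

Lemma Exi_boundary_ones l :
  (Exi H1 H2 H3 l + RaPRb H1 H2 H3 l - RbPRa H1 H2 H3 l) *m ones R _ = 0.
Proof.
rewrite /Exi /RaPRb /RbPRa /R1 /R2 /R3 P1_tens P2_tens P3_tens.
case: ifP => _; [|case: ifP => _];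
  rewrite !trmx_tens !trmx1 !tensmx_mul !mul1mx !mulmx1;
  rewrite -?tensmxDl -?tensmxBl -?tensmxDr -?tensmxBr !mul_tensmx_ones;
  by rewrite Ebnd_boundary_ones ?tensmx0 ?tens0mx.
Qed.

End TensorOnes.

Section UniformState.
Variables (R : realType) (N : nat).

Lemma hmx_const_ones (X : 'M[R]_N) c :
  hmx X (const_mx c) *m ones R N = c *: (X *m ones R N).
Proof.
apply/matrixP => i j; rewrite !mxE mulr_sumr.
by apply: eq_bigr => k _; rewrite /hmx /ones !mxE !mulr1 mulrC.
Qed.

Lemma fluxmx_uniform (Fl : 'rV[R]_5 -> 'rV[R]_5 -> 'rV[R]_5) i
    (q r : 'M[R]_(N, 5)) uc :
  (forall a, row a q = uc) -> (forall b, row b r = uc) ->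
  fluxmx Fl i q r = const_mx (Fl uc uc ord0 i).
Proof. by move=> qE rE; apply/matrixP => a b; rewrite !mxE qE rE. Qed.

Lemma volume_term_const (D : 'M[R]_N) d c : D *m ones R N = 0 ->
  hmx (D *m diag_mx d + diag_mx d *m D) (const_mx c) *m ones R N
  = c *: (D *m diag_mx d *m ones R N).
Proof.
by move=> D_ones; rewrite hmx_const_ones mulmxDl -[diag_mx d *m D *m _]mulmxA D_ones mulmx0 addr0.
Qed.

Lemma surface_term_const (E Pab Pba : 'M[R]_N) d c :
  is_diag_mx E -> (E + Pab - Pba) *m ones R N = 0 ->
  hmx (E *m diag_mx d) (const_mx c) *m ones R N
  + hmx (diag_mx d *m Pab) (const_mx c) *m ones R N
  - hmx (diag_mx d *m Pba) (const_mx c) *m ones R N = 0.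
Proof.
move=> /diag_mxP[e ->] bal; rewrite !hmx_const_ones -scalerDr -scalerBr.
by rewrite diag_mxC -!mulmxA -mulmxDr -mulmxBr -!mulmxDl -mulmxBl bal mulmx0 scaler0.
Qed.

End UniformState.

Section UniformSchemeRate.
Variables (R : realType) (N : nat).
Variables (D E Pab Pba : 'I_3 -> 'M[R]_N) (Minv : 'M[R]_N).
Hypotheses (D_ones : forall l, D l *m ones R N = 0)
  (E_diag : forall l, is_diag_mx (E l))
  (boundary_ones : forall l, (E l + Pab l - Pba l) *m ones R N = 0).

Lemma uniform_scheme_rate
    (Us : 'rV[R]_5 -> 'rV[R]_5 -> 'rV[R]_5)
    (Fs : 'I_3 -> 'rV[R]_5 -> 'rV[R]_5 -> 'rV[R]_5)
    (q : 'M[R]_(N, 5)) (qa qb : 'I_3 -> 'M[R]_(N, 5)) uc i (X : 'cV[R]_N)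
    (b : 'I_3 -> 'rV[R]_N) (a : 'I_3 -> 'I_3 -> 'rV[R]_N) :
  (forall j, row j q = uc) ->
  (forall l j, row j (qa l) = uc /\ row j (qb l) = uc) ->
  (forall m, \sum_(l < 3) D l *m diag_mx (a l m) *m ones R N = 0) ->
  X + \sum_(l < 3)
        hmx (D l *m diag_mx (b l) + diag_mx (b l) *m D l)
            (fluxmx Us i q q) *m ones R N
    + \sum_(l < 3) \sum_(m < 3)
        hmx (D l *m diag_mx (a l m) + diag_mx (a l m) *m D l)
            (fluxmx (Fs m) i q q) *m ones R N
  = Minv *m
      (\sum_(l < 3)
         (hmx (E l *m diag_mx (b l)) (fluxmx Us i q q) *m ones R N
          + hmx (diag_mx (b l) *m Pab l) (fluxmx Us i q (qa l)) *m ones R N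
          - hmx (diag_mx (b l) *m Pba l) (fluxmx Us i q (qb l)) *m ones R N))
    + Minv *m
      (\sum_(l < 3) \sum_(m < 3)
         (hmx (E l *m diag_mx (a l m)) (fluxmx (Fs m) i q q) *m ones R N
          + hmx (diag_mx (a l m) *m Pab l) (fluxmx (Fs m) i q (qa l)) *m ones R N
          - hmx (diag_mx (a l m) *m Pba l) (fluxmx (Fs m) i q (qb l)) *m ones R N)) ->
  X = - Us uc uc ord0 i *: \sum_(l < 3) D l *m diag_mx (b l) *m ones R N.
Proof.
move=> qE qabE metric_x.
have fluxE Fl r : (forall j, row j r = uc) ->
    fluxmx Fl i q r = const_mx (Fl uc uc ord0 i).
  exact: fluxmx_uniform.
have volumeE l Fl d :
    hmx (D l *m diag_mx d + diag_mx d *m D l) (fluxmx Fl i q q) *m ones R N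
    = Fl uc uc ord0 i *: (D l *m diag_mx d *m ones R N).
  by rewrite (fluxE _ _ qE) volume_term_const.
have surface0 l Fl d :
    hmx (E l *m diag_mx d) (fluxmx Fl i q q) *m ones R N
    + hmx (diag_mx d *m Pab l) (fluxmx Fl i q (qa l)) *m ones R N
    - hmx (diag_mx d *m Pba l) (fluxmx Fl i q (qb l)) *m ones R N = 0.
  have qaE j : row j (qa l) = uc := (qabE l j).1.
  have qbE j : row j (qb l) = uc := (qabE l j).2.
  by rewrite (fluxE _ _ qE) (fluxE _ _ qaE) (fluxE _ _ qbE) surface_term_const.
rewrite (eq_bigr _ (fun l _ => volumeE l Us (b l))) -scaler_sumr.
rewrite exchange_big [X in _ + X = _]big1 => [|m _]; last first.
  by rewrite (eq_bigr _ (fun l _ => volumeE l (Fs m) (a l m))) -scaler_sumr metric_x scaler0.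
rewrite [X in Minv *m X + _]big1 => [|l _]; last exact: surface0.
rewrite [X in _ + Minv *m X]big1 => [|l _]; last by apply: big1 => m _; exact: surface0.
by rewrite !mulmx0 !addr0 => /eqP; rewrite addr_eq0 scaleNr => /eqP.
Qed.

End UniformSchemeRate.

Lemma ddt_eq0_uniform (R : realType) (N p : nat) (J : R -> 'rV[R]_N)
    (Q : R -> 'M[R]_(N, p)) t uc :
  tdiff J -> tdiff Q -> (forall a, 0 < J t ord0 a) ->
  (forall a, row a (Q t) = uc) ->
  (forall i, ddt (fun s => diag_mx (J s) *m col i (Q s)) t
             = uc ord0 i *: ddt (fun s => diag_mx (J s) *m ones R N) t) ->
  ddt Q t = 0.
Proof.
move=> dJ dQ J_pos QE rate; apply/matrixP => a i.
have := congr1 (fun M : 'cV[R]_N => M a ord0) (rate i); rewrite !mxE.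
have -> : (fun s => (diag_mx (J s) *m col i (Q s)) a ord0)
          = (fun s => J s ord0 a) * (fun s => Q s a i).
  by apply/funext => s; rewrite mul_diag_mx !mxE.
have -> : (fun s => (diag_mx (J s) *m ones R N) a ord0) = (fun s => J s ord0 a).
  by apply/funext => s; rewrite mul_diag_mx !mxE mulr1.
rewrite !derive1E deriveM ?dJ ?dQ //.
have -> : Q t a i = uc ord0 i by rewrite -(QE a) mxE.
by move=> /eqP; rewrite -subr_eq0 addrK scaler_eq0 gt_eqF //= => /eqP.
Qed.

Theorem theorem4p6
  (R : realType)
  (* gas model *)
  (Rg gam Tinf rhoinf : R) (hRg : 0 < Rg) (hgam : 1 < gam)
  (hTinf : 0 < Tinf) (hrhoinf : 0 < rhoinf)
  (* two-point fluxes *)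
  (Usc : 'rV[R]_5 -> 'rV[R]_5 -> 'rV[R]_5)
  (Fsc : 'I_3 -> 'rV[R]_5 -> 'rV[R]_5 -> 'rV[R]_5)
  (hflux : two_point_fluxes Rg gam Tinf rhoinf Usc Fsc)
  (* 1-D SBP operators, N_l = n_l.+1 nodes *)
  (n1 n2 n3 : nat) (alpha beta : 'I_3 -> R)
  (xi1 : 'rV[R]_n1.+1) (xi2 : 'rV[R]_n2.+1) (xi3 : 'rV[R]_n3.+1)
  (hxi1 : nodes1 (alpha 0) (beta 0) xi1)
  (hxi2 : nodes1 (alpha 1) (beta 1) xi2)
  (hxi3 : nodes1 (alpha 2%:R) (beta 2%:R) xi3)
  (H1 Q1 D1 : 'M[R]_n1.+1) (H2 Q2 D2 : 'M[R]_n2.+1) (H3 Q3 D3 : 'M[R]_n3.+1)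
  (hsbp1 : sbp1 H1 Q1 D1) (hsbp2 : sbp1 H2 Q2 D2) (hsbp3 : sbp1 H3 Q3 D3)
  (* mesh: elements, nodal states, neighbour / boundary states, metrics *)
  (K : Type)
  (q : K -> R -> 'M[R]_((n1.+1 * n2.+1) * n3.+1, 5))
  (qa qb : K -> 'I_3 -> R -> 'M[R]_((n1.+1 * n2.+1) * n3.+1, 5))
  (jv : K -> R -> 'rV[R]_((n1.+1 * n2.+1) * n3.+1))
  (bv : K -> R -> 'I_3 -> 'rV[R]_((n1.+1 * n2.+1) * n3.+1))
  (av : K -> R -> 'I_3 -> 'I_3 -> 'rV[R]_((n1.+1 * n2.+1) * n3.+1))
  (hJpos : forall k t a, 0 < jv k t ord0 a)
  (hqdiff : forall k, tdiff (q k))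
  (hJdiff : forall k, tdiff (jv k))
  (* the semi-discrete scheme, for every element, time and component *)
  (hscheme : forall k t (i : 'I_5),
     ddt (fun s => diag_mx (jv k s) *m col i (q k s)) t
     + \sum_(l < 3)
         hmx (Dxi D1 D2 D3 l *m diag_mx (bv k t l) + diag_mx (bv k t l) *m Dxi D1 D2 D3 l)
             (fluxmx Usc i (q k t) (q k t)) *m ones R _
     + \sum_(l < 3) \sum_(m < 3)
         hmx (Dxi D1 D2 D3 l *m diag_mx (av k t l m) + diag_mx (av k t l m) *m Dxi D1 D2 D3 l)
             (fluxmx (Fsc m) i (q k t) (q k t)) *m ones R _
     = invmx (Mmass H1 H2 H3) *m
         (\sum_(l < 3)
            (hmx (Exi H1 H2 H3 l *m diag_mx (bv k t l)) (fluxmx Usc i (q k t) (q k t)) *m ones R _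
             + hmx (diag_mx (bv k t l) *m RaPRb H1 H2 H3 l) (fluxmx Usc i (q k t) (qa k l t)) *m ones R _
             - hmx (diag_mx (bv k t l) *m RbPRa H1 H2 H3 l) (fluxmx Usc i (q k t) (qb k l t)) *m ones R _))
     + invmx (Mmass H1 H2 H3) *m
         (\sum_(l < 3) \sum_(m < 3)
            (hmx (Exi H1 H2 H3 l *m diag_mx (av k t l m)) (fluxmx (Fsc m) i (q k t) (q k t)) *m ones R _
             + hmx (diag_mx (av k t l m) *m RaPRb H1 H2 H3 l) (fluxmx (Fsc m) i (q k t) (qa k l t)) *m ones R _
             - hmx (diag_mx (av k t l m) *m RbPRa H1 H2 H3 l) (fluxmx (Fsc m) i (q k t) (qb k l t)) *m ones R _)))
  (* discrete metric identities (GCL) *)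
  (hgcl_t : forall k t,
     ddt (fun s => diag_mx (jv k s) *m ones R _) t
     + \sum_(l < 3) Dxi D1 D2 D3 l *m diag_mx (bv k t l) *m ones R _ = 0)
  (hgcl_x : forall k t (m : 'I_3),
     \sum_(l < 3) Dxi D1 D2 D3 l *m diag_mx (av k t l m) *m ones R _ = 0) :
  (* freestream preservation *)
  forall (k : K) (t0 : R) (uc : 'rV[R]_5),
    admissible Rg gam uc ->
    (forall a, row a (q k t0) = uc) ->
    (forall (l : 'I_3) a, row a (qa k l t0) = uc /\ row a (qb k l t0) = uc) ->
    ddt (q k) t0 = 0.
Proof.
move=> k t0 uc uc_adm qE qabE.
have [_ /(_ uc uc_adm)[Usc_cons _] _] := hflux.
move: hsbp1 hsbp2 hsbp3 => [dH1 _ _ _ D1_ones] [dH2 _ _ _ D2_ones] [dH3 _ _ _ D3_ones].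
have D_ones l := Dxi_ones l D1_ones D2_ones D3_ones.
have E_diag l := Exi_is_diag l dH1 dH2 dH3.
have boundary_ones l := Exi_boundary_ones H1 H2 H3 l.
apply: (ddt_eq0_uniform (hJdiff k) (hqdiff k) (hJpos k t0) qE) => i.
have := uniform_scheme_rate D_ones E_diag boundary_ones qE qabE (hgcl_x k t0) (hscheme k t0 i).
rewrite Usc_cons => ->.
have /eqP := hgcl_t k t0; rewrite addr_eq0 => /eqP ->.
by rewrite scalerN scaleNr.
Qed.
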